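(* Let $\gamma_1,\dots,\gamma_T$ be real numbers with $0<\gamma_k<1$ for all $1\le k\le T$, and let $\gamma_{max}^k=\max\{\gamma_1,\dots,\gamma_k\}$. Let $\alpha>0$, $0<\beta<1/\gamma_{max}^T$ and $i\in\{1,2,\dots\}$. Define $$\Psi(k)=\left[(1-\gamma_{max}^k\beta)^{k-1}+\dots+(1-\gamma_{max}^k\beta)+1\right](\gamma_{max}^k)^i\alpha.$$ Then for every $k$ with $1\le k\le T-1$, $$(1-\gamma_{k+1}\beta)\Psi(k)+(\gamma_{k+1})^i\alpha\le\Psi(k+1).$$ *)

From mathcomp Require Import all_boot all_order all_algebra.
Set Implicit Arguments. Unset Strict Implicit. Unset Printing Implicit Defensive.
Import Order.TTheory GRing.Theory Num.Theory.
Local Open Scope ring_scope.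

Definition gmax (R : realFieldType) (gamma : nat -> R) (k : nat) : R :=
  \big[Num.max/gamma 1%N]_(1 <= j < k.+1) gamma j.

Definition Psi (R : realFieldType) (gamma : nat -> R) (alpha beta : R) (i k : nat) : R :=
  (\sum_(j < k) (1 - gmax gamma k * beta) ^+ j) * (gmax gamma k) ^+ i * alpha.

From mathcomp Require Import all_boot all_order all_algebra.
From mathcomp Require Import zify ring lra.
Import Order.TTheory GRing.Theory Num.Theory.

(* Write Psi(k) = psi_k(g) alpha with psi_k(x) = (sum_(j<k) (1 - x beta)^j) x^i and
   g = gamma_max^k.  Since gamma_max^(k+1) = g' = max(g, c) with c = gamma_(k+1),
   Psi(k+1) = ((1 - g' beta) psi_k(g') + g'^i) alpha, and the geometric sum gives
   beta psi_k(x) = (1 - (1 - x beta)^k) x^(i-1).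
   If c <= g, then g' = g and the claim is (g - c) beta psi_k(g) <= g^i - c^i, which
   holds because beta psi_k(g) <= g^(i-1).  If g < c, then g' = c and the claim is
   psi_k(g) <= psi_k(c): psi_k is nondecreasing on [0, 1/beta] since both factors of
   beta psi_k(x) are. *)

Local Open Scope ring_scope.

Section RunningMax.

Variables (R : realFieldType) (gamma : nat -> R).

Lemma le_gamma1_gmax k : gamma 1%N <= gmax gamma k.
Proof. exact: bigmax_ge_id. Qed.

Lemma gmaxS k : gmax gamma k.+1 = Num.max (gmax gamma k) (gamma k.+1).
Proof.
rewrite /gmax (big_cat_nat_idem (maxxx _) (n := k.+1)) //= big_nat1_id.
by rewrite maxCA -[in RHS]maxC -bigmax_idr.
Qed.

Lemma le_gmax k m : (k <= m)%N -> gmax gamma k <= gmax gamma m.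
Proof. by move=> le_km; apply: le_bigmax_nat. Qed.

End RunningMax.

Lemma geom_sum_1B_mul (R : comPzRingType) (a : R) k :
  (\sum_(j < k) (1 - a) ^+ j) * a = 1 - (1 - a) ^+ k.
Proof. by rewrite -[RHS]opprK opprB subrX1 addrAC subrr add0r mulNr opprK mulrC. Qed.

Lemma expr1B_bounds {R : realDomainType} (a : R) k :
  0 <= a <= 1 -> 0 <= (1 - a) ^+ k <= 1.
Proof.
move=> /andP[a_ge0 a_le1].
by rewrite exprn_ge0 ?exprn_ile1 ?subr_ge0 // lerBlDr lerDl.
Qed.

Definition psi {R : realFieldType} (beta : R) (i k : nat) (x : R) : R :=
  (\sum_(j < k) (1 - x * beta) ^+ j) * x ^+ i.

Lemma PsiE (R : realFieldType) (gamma : nat -> R) alpha beta i k :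
  Psi gamma alpha beta i k = psi beta i k (gmax gamma k) * alpha.
Proof. by []. Qed.

Section Psi.

Variables (R : realFieldType) (beta : R) (i k : nat).
Hypothesis beta_gt0 : 0 < beta.

Lemma damping_bounds [x] : 0 <= x -> x * beta <= 1 -> 0 <= (1 - x * beta) ^+ k <= 1.
Proof. by move=> x_ge0 xb_le1; rewrite expr1B_bounds // xb_le1 mulr_ge0 // ltW. Qed.

Lemma psiS x : psi beta i k.+1 x = (1 - x * beta) * psi beta i k x + x ^+ i.
Proof.
rewrite /psi big_ord_recl expr0 mulrDl mul1r addrC mulrA mulr_sumr.
by congr (_ * _ + _); apply: eq_bigr => j _; rewrite exprS.
Qed.

Lemma psi_mul_beta x : psi beta i.+1 k x * beta = (1 - (1 - x * beta) ^+ k) * x ^+ i.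
Proof. by rewrite -geom_sum_1B_mul /psi exprS; ring. Qed.

Lemma psi_mul_beta_le [x] : 0 <= x -> x * beta <= 1 -> psi beta i.+1 k x * beta <= x ^+ i.
Proof.
move=> x_ge0 xb_le1; rewrite psi_mul_beta ler_piMl ?exprn_ge0 //.
have /andP[damp_ge0 _] := damping_bounds x_ge0 xb_le1.
by rewrite lerBlDr lerDl.
Qed.

Lemma le_psi x y : 0 <= x <= y -> y * beta <= 1 -> psi beta i.+1 k x <= psi beta i.+1 k y.
Proof.
move=> /andP[x_ge0 le_xy] yb_le1; rewrite -(ler_pM2r beta_gt0) !psi_mul_beta.
have le_xyb : x * beta <= y * beta by rewrite ler_wpM2r // ltW.
have xb_le1 := le_trans le_xyb yb_le1.
have /andP[_ damp_le1] := damping_bounds x_ge0 xb_le1.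
apply: ler_pM; rewrite ?subr_ge0 ?exprn_ge0 //.
- by rewrite lerD2l lerN2; apply: lerXn2r; rewrite ?nnegrE ?subr_ge0 ?lerD2l ?lerN2.
- by apply: lerXn2r; rewrite ?nnegrE ?(le_trans x_ge0 le_xy).
Qed.

Lemma psi_step_le c g : 0 <= c <= g -> g * beta <= 1 ->
  (1 - c * beta) * psi beta i.+1 k g + c ^+ i.+1 <=
  (1 - g * beta) * psi beta i.+1 k g + g ^+ i.+1.
Proof.
move=> /andP[c_ge0 le_cg] gb_le1.
have g_ge0 := le_trans c_ge0 le_cg.
have := psi_mul_beta_le g_ge0 gb_le1.
have : c ^+ i <= g ^+ i by rewrite lerXn2r ?nnegrE.
rewrite !exprS; set P := psi _ _ _ _; set Q := c ^+ i; set G := g ^+ i.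
(* (g - c) * (P * beta) <= (g - c) * G <= g * G - c * Q *)
nra.
Qed.

End Psi.

Theorem lemma13 (R : realFieldType) (T : nat) (gamma : nat -> R)
  (hgamma : forall k : nat, (1 <= k <= T)%N -> 0 < gamma k < 1)
  (alpha beta : R) (halpha : 0 < alpha)
  (hbeta0 : 0 < beta) (hbeta1 : beta < (gmax gamma T)^-1)
  (i : nat) (hi : (1 <= i)%N) :
  forall k : nat, (1 <= k <= T - 1)%N ->
    (1 - gamma k.+1 * beta) * Psi gamma alpha beta i k + (gamma k.+1) ^+ i * alpha
    <= Psi gamma alpha beta i k.+1.
Proof.
move=> k /andP[k_ge1 k_le_Tm1]; case: i hi => // i _.
have kS_le_T : (k.+1 <= T)%N by lia.
have /andP[gamma1_gt0 _] := hgamma 1%N ltac:(lia).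
have /andP[c_gt0 _] := hgamma k.+1 ltac:(lia).
have g_ge0 : 0 <= gmax gamma k by rewrite (le_trans (ltW gamma1_gt0)) ?le_gamma1_gmax.
have gT_gt0 : 0 < gmax gamma T by rewrite (lt_le_trans gamma1_gt0) ?le_gamma1_gmax.
have gTb_lt1 : gmax gamma T * beta < 1.
  by rewrite -(mulfV (lt0r_neq0 gT_gt0)) ltr_pM2l.
have gSb_le1 : gmax gamma k.+1 * beta <= 1.
  by apply/ltW/(le_lt_trans _ gTb_lt1); rewrite ler_pM2r //; exact: le_gmax.
rewrite !PsiE psiS mulrA -mulrDl ler_pM2r // gmaxS.
rewrite gmaxS in gSb_le1; case: (leP (gamma k.+1) (gmax gamma k)) => [le_cg | lt_gc].
- rewrite (max_idPl le_cg) in gSb_le1 *.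
  by apply: psi_step_le => //; rewrite (ltW c_gt0) le_cg.
- rewrite (max_idPr (ltW lt_gc)) in gSb_le1 *.
  rewrite lerD2r; apply: ler_wpM2l; first by rewrite subr_ge0.
  by apply: le_psi => //; rewrite g_ge0 (ltW lt_gc).
Qed.
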